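(* Let $L$ be a complete lattice and $X$ a dcpo. There is a bijective correspondence between maps $f\colon L\to\mathcal{O}(X)$ preserving all joins and the top element and Scott continuous maps $g\colon X\to(L\setminus\{1\})^{\mathrm{op}}$, given by $$\overline{f}(x)=\bigvee\{a\in L: x\notin f(a)\},\qquad\overline{g}(a)=\{x\in X: a\not\le g(x)\};$$ in particular $\overline f(x)\ne 1$, $\overline f$ sends directed joins in $X$ to meets in $L$, and $\overline g(a)$ is Scott open with $\overline g(1)=X$. The monad on $\mathbf{Dcpo}$ induced by the resulting adjunction is isomorphic to the Hoare power domain $\mathcal{H}$, where $\mathcal{H}(X)$ is the set of non-empty Scott closed subsets of $X$ ordered by inclusion, $\mathcal{H}(f)(U)$ is the closure of $f(U)$, the unit is $x\mapsto{\downarrow}x$ and the multiplication is $A\mapsto\overline{\bigcup A}$ (closure of the union). Under this correspondence a Kleisli map $g\colon X\to\mathcal{H}(Y)$ corresponds to the predicate transformer $\mathcal{O}(Y)\to\mathcal{O}(X)$, $V\mapsto\{x: V\cap g(x)\ne\emptyset\}$.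
   Context: For a dcpo $X$, $\mathcal{O}(X)$ is the complete lattice of Scott open subsets (upsets $U$ such that any directed join in $U$ has some member of the directed set in $U$), ordered by inclusion; Scott closed sets are their complements; ${\downarrow}x=\{y:y\le x\}$. $(L\setminus\{1\})^{\mathrm{op}}$ is $L$ minus its top with reversed order, a dcpo with directed joins given by meets in $L$. $\mathbf{Dcpo}$ is the category of dcpos and Scott continuous maps. *)

(* dcpos and complete lattices as order relations on types,
   subsets as predicates. *)
From Stdlib Require Import Classical.

Definition incl {A : Type} (U V : A -> Prop) : Prop := forall x, U x -> V x.

Definition image {A B : Type} (f : A -> B) (D : A -> Prop) : B -> Prop :=
  fun y => exists x, D x /\ f x = y.

Definition is_lub {A : Type} (P : A -> Prop) (le : A -> A -> Prop)
  (S : A -> Prop) (s : A) : Prop :=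
  P s /\ (forall x, S x -> le x s) /\
  (forall u, P u -> (forall x, S x -> le x u) -> le s u).

Definition directed {A : Type} (P : A -> Prop) (le : A -> A -> Prop)
  (D : A -> Prop) : Prop :=
  (exists d, D d) /\ (forall d, D d -> P d) /\
  (forall d e, D d -> D e -> exists f, D f /\ le d f /\ le e f).

Definition is_dcpo {A : Type} (P : A -> Prop) (le : A -> A -> Prop) : Prop :=
  (forall x, P x -> le x x) /\
  (forall x y z, P x -> P y -> P z -> le x y -> le y z -> le x z) /\
  (forall x y, P x -> P y -> le x y -> le y x -> x = y) /\
  (forall D, directed P le D -> exists s, is_lub P le D s).

Definition scott_cont {A B : Type} (PA : A -> Prop) (leA : A -> A -> Prop)
  (PB : B -> Prop) (leB : B -> B -> Prop) (f : A -> B) : Prop :=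
  (forall x, PA x -> PB (f x)) /\
  (forall D s, directed PA leA D -> is_lub PA leA D s ->
     is_lub PB leB (image f D) (f s)).

Definition scott_open {A : Type} (P : A -> Prop) (le : A -> A -> Prop)
  (U : A -> Prop) : Prop :=
  (forall x, U x -> P x) /\
  (forall x y, P x -> P y -> U x -> le x y -> U y) /\
  (forall D s, directed P le D -> is_lub P le D s -> U s ->
     exists d, D d /\ U d).

Definition scott_closed {A : Type} (P : A -> Prop) (le : A -> A -> Prop)
  (C : A -> Prop) : Prop :=
  (forall x, C x -> P x) /\ scott_open P le (fun x => P x /\ ~ C x).

Record clat := {
  ct :> Type;
  cle : ct -> ct -> Prop;
  cjoin : (ct -> Prop) -> ct;
  cle_refl : forall x, cle x x;
  cle_trans : forall x y z, cle x y -> cle y z -> cle x z;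
  cle_antisym : forall x y, cle x y -> cle y x -> x = y;
  cjoin_lub : forall S, is_lub (fun _ => True) cle S (cjoin S)
}.

Definition ctop (L : clat) : L := cjoin L (fun _ => True).

Definition join_top_pres (L : clat) {A : Type} (P : A -> Prop)
  (le : A -> A -> Prop) (f : L -> A -> Prop) : Prop :=
  (forall a, scott_open P le (f a)) /\
  (forall (S : L -> Prop) x, f (cjoin L S) x <-> exists a, S a /\ f a x) /\
  (forall x, f (ctop L) x <-> P x).

Definition cont_to_Lop (L : clat) {A : Type} (P : A -> Prop)
  (le : A -> A -> Prop) (g : A -> L) : Prop :=
  scott_cont P le (fun a => a <> ctop L) (fun a b => cle L b a) g.

Definition fbar (L : clat) {A : Type} (f : L -> A -> Prop) (x : A) : L :=
  cjoin L (fun a => ~ f a x).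

Definition gbar (L : clat) {A : Type} (P : A -> Prop) (g : A -> L)
  (a : L) : A -> Prop :=
  fun x => P x /\ ~ cle L a (g x).

(* T(X) = (O(X) \ {X})^op : proper Scott opens, reverse inclusion *)
Definition Tcar {A : Type} (P : A -> Prop) (le : A -> A -> Prop)
  (U : A -> Prop) : Prop :=
  scott_open P le U /\ exists x, P x /\ ~ U x.

Definition Tle {A : Type} (U V : A -> Prop) : Prop := incl V U.

(* unit: eta_X = fbar(id_{O X}), x |-> \/ {U in O X | x notin U} *)
Definition etaT {A : Type} (P : A -> Prop) (le : A -> A -> Prop)
  (x : A) : A -> Prop :=
  fun y => exists U, scott_open P le U /\ ~ U x /\ U y.

(* action on h : X -> Y: R(O h)(U) = \/ {V in O Y | O(h)(V) <= U} *)
Definition Tmap {A B : Type} (PA : A -> Prop) (PB : B -> Prop)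
  (leB : B -> B -> Prop) (h : A -> B) (U : A -> Prop) : B -> Prop :=
  fun y => exists V, scott_open PB leB V /\
    incl (fun x => PA x /\ V (h x)) U /\ V y.

(* multiplication: mu_X = R(eps_{O X}), where
   eps_L = gbar(id_{R L}) : a |-> {u in R L | ~ a <= u},
   R(k)(m) = \/ {a | k a <= m} *)
Definition muT {A : Type} (P : A -> Prop) (le : A -> A -> Prop)
  (UU : (A -> Prop) -> Prop) : A -> Prop :=
  fun x => exists V, scott_open P le V /\
    incl (fun U => Tcar P le U /\ ~ incl V U) UU /\ V x.

Definition Hcar {A : Type} (P : A -> Prop) (le : A -> A -> Prop)
  (C : A -> Prop) : Prop :=
  scott_closed P le C /\ exists x, C x.

Definition closure {A : Type} (P : A -> Prop) (le : A -> A -> Prop)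
  (S : A -> Prop) : A -> Prop :=
  fun y => P y /\ forall C, scott_closed P le C -> incl S C -> C y.

Definition Hmap {A B : Type} (PB : B -> Prop) (leB : B -> B -> Prop)
  (h : A -> B) (C : A -> Prop) : B -> Prop :=
  closure PB leB (image h C).

Definition etaH {A : Type} (P : A -> Prop) (le : A -> A -> Prop)
  (x : A) : A -> Prop :=
  fun y => P y /\ le y x.

Definition muH {A : Type} (P : A -> Prop) (le : A -> A -> Prop)
  (AA : (A -> Prop) -> Prop) : A -> Prop :=
  closure P le (fun x => exists C, AA C /\ C x).

(* The correspondence is the Galois connection [a <= fbar f x <-> x \notin f a]:
   join preservation of [f] makes [fbar f x] the largest [a] with [x \notin f a],
   and Scott openness of [f a] is exactly Scott continuity of [fbar f] into
   [(L \ {1})^op].  For the monad, the relative complement [U |-> X \ U] is an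
   order isomorphism from the proper Scott opens under reverse inclusion onto
   the non-empty Scott closed sets; every structure map of [T] is a union of
   Scott opens, and its complement is recognised as a Scott closure via the
   description of the closure of [S] as the points all of whose open
   neighbourhoods meet [S]. *)
From Stdlib Require Import Classical FunctionalExtensionality PropExtensionality.

Lemma pred_ext {A : Type} (U V : A -> Prop) : (forall x, U x <-> V x) -> U = V.
Proof.
  intro H; apply functional_extensionality; intro x.
  apply propositional_extensionality; auto.
Qed.

Section CompleteLattice.

Variable L : clat.

Lemma cjoin_ub (S : L -> Prop) a : S a -> cle L a (cjoin L S).
Proof. exact (proj1 (proj2 (cjoin_lub L S)) a). Qed.

Lemma cjoin_least (S : L -> Prop) u :
  (forall a, S a -> cle L a u) -> cle L (cjoin L S) u.
Proof. exact (proj2 (proj2 (cjoin_lub L S)) u I). Qed.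

Lemma le_ctop a : cle L a (ctop L).
Proof. exact (cjoin_ub _ a I). Qed.

Lemma ctop_le_eq a : cle L (ctop L) a -> a = ctop L.
Proof. intro H; apply cle_antisym; [apply le_ctop | exact H]. Qed.

Lemma cjoin_pair a b : cle L a b -> cjoin L (fun c => c = a \/ c = b) = b.
Proof.
  intro Hab; apply cle_antisym.
  - apply cjoin_least; intros c [-> | ->]; [exact Hab | apply cle_refl].
  - apply cjoin_ub; right; reflexivity.
Qed.

End CompleteLattice.

Section Correspondence.

Variables (L : clat) (A : Type) (P : A -> Prop) (le : A -> A -> Prop).

Section JoinPreserving.

Variable f : L -> A -> Prop.
Hypothesis Hf : join_top_pres L P le f.

Lemma join_top_pres_mono a b x : cle L a b -> f a x -> f b x.
Proof.
  intros Hab Ha; rewrite <- (cjoin_pair L a b Hab).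
  apply (proj1 (proj2 Hf)); exists a; auto.
Qed.

Lemma le_fbar a x : cle L a (fbar L f x) <-> ~ f a x.
Proof.
  split.
  - intros Hle Hfa.
    destruct (proj1 (proj1 (proj2 Hf) _ x) (join_top_pres_mono _ _ x Hle Hfa))
      as [c [Hc Hfc]].
    exact (Hc Hfc).
  - intro H; apply cjoin_ub; exact H.
Qed.

Lemma not_fbar_self x : ~ f (fbar L f x) x.
Proof. apply le_fbar, cle_refl. Qed.

Lemma fbar_neq_top x : P x -> fbar L f x <> ctop L.
Proof.
  intros Px E; apply (not_fbar_self x).
  rewrite E; apply (proj2 (proj2 Hf)); exact Px.
Qed.

Lemma fbar_cont_to_Lop : cont_to_Lop L P le (fbar L f).
Proof.
  split; [exact fbar_neq_top |].
  intros D s Hdir Hlub.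
  destruct (proj1 Hf (fbar L f s)) as [_ [Hup _]].
  split; [apply fbar_neq_top, (proj1 Hlub) |]; split.
  - intros y [d [Dd <-]]; apply le_fbar; intro Hfd.
    apply (not_fbar_self s).
    apply (Hup d s); try apply Hlub; try apply Hdir; auto.
  - intros u _ Hlow; apply le_fbar; intro Hfu.
    destruct (proj2 (proj2 (proj1 Hf u)) D s Hdir Hlub Hfu) as [d [Dd Hfd]].
    exact (proj1 (le_fbar u d) (Hlow _ (ex_intro _ d (conj Dd eq_refl))) Hfd).
Qed.

Lemma gbar_fbar a x : gbar L P (fbar L f) a x <-> f a x.
Proof.
  split.
  - intros [_ Hn]; apply NNPP; intro H; exact (Hn (proj2 (le_fbar a x) H)).
  - intro H; split.
    + exact (proj1 (proj1 Hf a) x H).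
    + intro Hle; exact (proj1 (le_fbar a x) Hle H).
Qed.

End JoinPreserving.

Lemma fbar_gbar (g : A -> L) x : P x -> fbar L (gbar L P g) x = g x.
Proof.
  intro Px; apply cle_antisym.
  - apply cjoin_least; intros a Ha; apply NNPP; intro Hn; apply Ha; split; assumption.
  - apply cjoin_ub; intros [_ H]; apply H, cle_refl.
Qed.

Section ContinuousMaps.

Hypothesis Hd : is_dcpo P le.
Variable g : A -> L.
Hypothesis Hg : cont_to_Lop L P le g.

Lemma cont_to_Lop_antitone x y : P x -> P y -> le x y -> cle L (g y) (g x).
Proof.
  intros Px Py Hxy; destruct Hd as [Hrefl _].
  set (D := fun z => z = x \/ z = y).
  assert (Hdir : directed P le D).
  { split; [exists x; left; reflexivity | split].
    - intros d [-> | ->]; assumption.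
    - intros d e Hd' He; exists y; split; [right; reflexivity |].
      split; [destruct Hd' as [-> | ->] | destruct He as [-> | ->]]; auto. }
  assert (Hlub : is_lub P le D y).
  { split; [exact Py | split].
    - intros z [-> | ->]; auto.
    - intros u _ Hu; apply Hu; right; reflexivity. }
  apply (proj1 (proj2 (proj2 Hg D y Hdir Hlub))).
  exists x; split; [left |]; reflexivity.
Qed.

Lemma gbar_scott_open a : scott_open P le (gbar L P g a).
Proof.
  split; [|split].
  - intros x [Px _]; exact Px.
  - intros x y Px Py [_ Hx] Hxy; split; [exact Py |]; intro Hay.
    apply Hx; eapply cle_trans; [exact Hay | apply cont_to_Lop_antitone; auto].
  - intros D s Hdir Hlub [_ Has]; apply NNPP; intro Hno; apply Has.
    assert (Hall : forall d, D d -> cle L a (g d)).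
    { intros d Dd; apply NNPP; intro Hn; apply Hno.
      exists d; split; [exact Dd | split; [apply Hdir |]; auto]. }
    pose proof Hdir as [[d Dd] [HDP _]].
    destruct (classic (a = ctop L)) as [-> | Ea].
    + exfalso; apply (proj1 Hg d (HDP d Dd)), ctop_le_eq, Hall, Dd.
    + apply (proj2 (proj2 (proj2 Hg D s Hdir Hlub)) a Ea).
      intros y [e [De <-]]; apply Hall, De.
Qed.

Lemma gbar_join_top_pres : join_top_pres L P le (gbar L P g).
Proof.
  split; [exact gbar_scott_open | split].
  - intros S x; split.
    + intros [Px Hn]; apply NNPP; intro Hno; apply Hn, cjoin_least.
      intros a Sa; apply NNPP; intro Hna; apply Hno; exists a; split; [exact Sa | split; assumption].
    + intros [a [Sa [Px Hna]]]; split; [exact Px |]; intro Hj.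
      apply Hna; eapply cle_trans; [apply cjoin_ub, Sa | exact Hj].
  - intro x; split; [intros [Px _]; exact Px |].
    intro Px; split; [exact Px |]; intro H.
    exact (proj1 Hg x Px (ctop_le_eq L _ H)).
Qed.

End ContinuousMaps.

End Correspondence.

Definition compl {A : Type} (P U : A -> Prop) : A -> Prop := fun x => P x /\ ~ U x.

Section ScottTopology.

Variables (A : Type) (P : A -> Prop) (le : A -> A -> Prop).

Lemma compl_involutive C : incl C P -> compl P (compl P C) = C.
Proof.
  intro HC; apply pred_ext; intro x; split.
  - intros [Px Hn]; apply NNPP; intro Cx; exact (Hn (conj Px Cx)).
  - intro Cx; split; [apply HC, Cx | intros [_ Hn]; exact (Hn Cx)].
Qed.

Lemma scott_closed_compl U : scott_open P le U -> scott_closed P le (compl P U).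
Proof.
  intro HU; split; [intros x [Px _]; exact Px |].
  change (scott_open P le (compl P (compl P U))).
  rewrite compl_involutive; [exact HU | exact (proj1 HU)].
Qed.

Lemma Hcar_compl U : Tcar P le U -> Hcar P le (compl P U).
Proof.
  intros [HU [x [Px Ux]]]; split; [apply scott_closed_compl, HU |].
  exists x; split; assumption.
Qed.

Lemma Tcar_compl C : Hcar P le C -> Tcar P le (compl P C).
Proof.
  intros [HC [x Cx]]; split; [exact (proj2 HC) |].
  exists x; split; [exact (proj1 HC x Cx) | intros [_ Hn]; exact (Hn Cx)].
Qed.

Lemma Tle_compl U V : incl V P -> Tle U V <-> incl (compl P U) (compl P V).
Proof.
  intro HV; unfold Tle, incl, compl; split.
  - intros H x [Px Ux]; split; auto.
  - intros H x Vx; apply NNPP; intro Ux; exact (proj2 (H x (conj (HV x Vx) Ux)) Vx).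
Qed.

Lemma subset_closure (S : A -> Prop) y : P y -> S y -> closure P le S y.
Proof. intros Py Sy; split; [exact Py |]; intros C _ HC; apply HC, Sy. Qed.

Lemma closure_meets (S : A -> Prop) : incl S P -> forall y,
  closure P le S y <->
  P y /\ (forall V, scott_open P le V -> V y -> exists z, S z /\ V z).
Proof.
  intros HS y; split.
  - intros [Py Hc]; split; [exact Py |]; intros V HV Vy.
    apply NNPP; intro Hno.
    refine (proj2 (Hc _ (scott_closed_compl V HV) _) Vy).
    intros z Sz; split; [apply HS, Sz |]; intro Vz; apply Hno; exists z; auto.
  - intros [Py Hv]; split; [exact Py |]; intros C [_ HCo] HSC.
    apply NNPP; intro Cy.
    destruct (Hv _ HCo (conj Py Cy)) as [z [Sz [_ Hn]]]; exact (Hn (HSC z Sz)).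
Qed.

Lemma scott_open_not_below x :
  is_dcpo P le -> P x -> scott_open P le (fun z => P z /\ ~ le z x).
Proof.
  intros [_ [Htrans _]] Px; split; [|split].
  - intros z [Pz _]; exact Pz.
  - intros z w Pz Pw [_ Hz] Hzw; split; [exact Pw |]; intro Hw.
    exact (Hz (Htrans z w x Pz Pw Px Hzw Hw)).
  - intros D s Hdir Hlub [Ps Hs]; apply NNPP; intro Hno; apply Hs.
    apply (proj2 (proj2 Hlub) x Px); intros d Dd; apply NNPP; intro Hn; apply Hno.
    exists d; split; [exact Dd | split; [apply (proj1 (proj2 Hdir)), Dd | exact Hn]].
Qed.

Lemma scott_open_meets V : scott_open P le V ->
  scott_open (Hcar P le) incl (fun C => Hcar P le C /\ exists z, C z /\ V z).
Proof.
  intro HV; split; [|split].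
  - intros C [HC _]; exact HC.
  - intros C C' _ HC' [_ [z [Cz Vz]]] Hi; split; [exact HC' |]; exists z; auto.
  - intros D s Hdir Hlub [_ [z [sz Vz]]]; apply NNPP; intro Hno.
    destruct Hdir as [[d Dd] [HDH _]].
    assert (Hout : forall d, D d -> incl d (compl P V)).
    { intros e De y ey; split; [exact (proj1 (proj1 (HDH e De)) y ey) |]; intro Vy.
      apply Hno; exists e; split; [exact De | split; [exact (HDH e De) |]].
      exists y; auto. }
    assert (HK : Hcar P le (compl P V)).
    { split; [apply scott_closed_compl, HV |].
      destruct (proj2 (HDH d Dd)) as [w dw]; exists w; exact (Hout d Dd w dw). }
    exact (proj2 (proj2 (proj2 Hlub) _ HK Hout z sz) Vz).
Qed.

End ScottTopology.

Lemma not_incl_compl {A : Type} (P U V : A -> Prop) :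
  incl V P -> ~ incl V U <-> exists y, V y /\ compl P U y.
Proof.
  intro HV; split.
  - intro Hn; apply NNPP; intro Hno; apply Hn; intros y Vy; apply NNPP; intro Uy.
    apply Hno; exists y; split; [exact Vy | split; [apply HV, Vy | exact Uy]].
  - intros [y [Vy [_ Uy]]] Hi; exact (Uy (Hi y Vy)).
Qed.

Lemma compl_Tmap {A B : Type} (PA : A -> Prop) (PB : B -> Prop)
    (leB : B -> B -> Prop) (h : A -> B) U :
  (forall x, PA x -> PB (h x)) ->
  compl PB (Tmap PA PB leB h U) = Hmap PB leB h (compl PA U).
Proof.
  intro Hh; apply pred_ext; intro y; unfold Hmap.
  rewrite closure_meets by (intros z [x [[PAx _] <-]]; apply Hh, PAx).
  split.
  - intros [Py Hn]; split; [exact Py |]; intros V HV Vy.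
    apply NNPP; intro Hno; apply Hn; exists V; split; [exact HV | split; [| exact Vy]].
    intros x [PAx Vhx]; apply NNPP; intro Ux.
    apply Hno; exists (h x); split; [exists x; split; [split |] |]; auto.
  - intros [Py Hv]; split; [exact Py |]; intros [V [HV [Hi Vy]]].
    destruct (Hv V HV Vy) as [z [[x [[PAx Ux] <-]] Vz]].
    exact (Ux (Hi x (conj PAx Vz))).
Qed.

Lemma compl_etaT {A : Type} (P : A -> Prop) (le : A -> A -> Prop) x :
  is_dcpo P le -> P x -> compl P (etaT P le x) = etaH P le x.
Proof.
  intros Hd Px; apply pred_ext; intro y; split.
  - intros [Py Hn]; split; [exact Py |]; apply NNPP; intro Hyx; apply Hn.
    exists (fun z => P z /\ ~ le z x).
    split; [apply scott_open_not_below; assumption |].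
    split; [intros [_ H]; exact (H (proj1 Hd x Px)) | split; assumption].
  - intros [Py Hyx]; split; [exact Py |]; intros [U [HU [Ux Uy]]].
    exact (Ux (proj1 (proj2 HU) y x Py Px Uy Hyx)).
Qed.

(* To extract a point from the closure in [muH], a Scott open [V] of [X] is
   lifted to the Scott open of [H(X)] of closed sets meeting [V]. *)
Lemma compl_muT {A : Type} (P : A -> Prop) (le : A -> A -> Prop) UU :
  compl P (muT P le UU) =
  muH P le (Hmap (Hcar P le) incl (compl P) (compl (Tcar P le) UU)).
Proof.
  apply pred_ext; intro x; unfold muH, Hmap.
  rewrite closure_meets
    by (intros z [C [[[[HCP _] _] _] Cz]]; exact (HCP z Cz)).
  split.
  - intros [Px Hn]; split; [exact Px |]; intros V HV Vx.
    apply NNPP; intro Hno; apply Hn; exists V; split; [exact HV | split; [| exact Vx]].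
    intros U [TU HVU]; apply NNPP; intro HnU; apply HVU.
    intros z Vz; apply NNPP; intro Uz; apply Hno; exists z; split; [| exact Vz].
    exists (compl P U); split.
    + apply subset_closure; [apply Hcar_compl, TU |].
      exists U; split; [split; assumption | reflexivity].
    + split; [apply (proj1 HV), Vz | exact Uz].
  - intros [Px Hv]; split; [exact Px |]; intros [V [HV [Hi Vx]]].
    destruct (Hv V HV Vx) as [z [[C [HC Cz]] Vz]].
    rewrite closure_meets in HC by (intros C' [U [[TU _] <-]]; apply Hcar_compl, TU).
    destruct (proj2 HC _ (scott_open_meets _ _ _ V HV)
                (conj (proj1 HC) (ex_intro _ z (conj Cz Vz))))
      as [C' [[U [[TU HnU] <-]] [_ [w [[_ Uw] Vw]]]]].
    apply HnU, Hi; split; [exact TU |]; intro Hinc; exact (Uw (Hinc w Vw)).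
Qed.
Theorem mainTheorem9 :
  (* the bijective correspondence *)
  (forall (L : clat) (A : Type) (P : A -> Prop) (le : A -> A -> Prop),
     is_dcpo P le ->
     (forall f, join_top_pres L P le f -> cont_to_Lop L P le (fbar L f)) /\
     (forall g, cont_to_Lop L P le g -> join_top_pres L P le (gbar L P g)) /\
     (forall f, join_top_pres L P le f ->
        forall a x, gbar L P (fbar L f) a x <-> f a x) /\
     (forall g, cont_to_Lop L P le g ->
        forall x, P x -> fbar L (gbar L P g) x = g x))
  /\
  (* the induced monad T is isomorphic to the Hoare power domain H *)
  (exists phi : forall A : Type, (A -> Prop) -> (A -> A -> Prop) ->
                  (A -> Prop) -> (A -> Prop),
     (* each phi_X is an isomorphism of dcpos T(X) ~ H(X) *)
     (forall (A : Type) (P : A -> Prop) (le : A -> A -> Prop), is_dcpo P le ->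
        (forall U, Tcar P le U -> Hcar P le (phi A P le U)) /\
        (forall C, Hcar P le C -> exists U, Tcar P le U /\ phi A P le U = C) /\
        (forall U V, Tcar P le U -> Tcar P le V ->
           (Tle U V <-> incl (phi A P le U) (phi A P le V)))) /\
     (* naturality *)
     (forall (A : Type) (PA : A -> Prop) (leA : A -> A -> Prop)
             (B : Type) (PB : B -> Prop) (leB : B -> B -> Prop) (h : A -> B),
        is_dcpo PA leA -> is_dcpo PB leB -> scott_cont PA leA PB leB h ->
        forall U, Tcar PA leA U ->
          phi B PB leB (Tmap PA PB leB h U) = Hmap PB leB h (phi A PA leA U)) /\
     (* compatibility with the units *)
     (forall (A : Type) (P : A -> Prop) (le : A -> A -> Prop), is_dcpo P le ->
        forall x, P x -> phi A P le (etaT P le x) = etaH P le x) /\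
     (* compatibility with the multiplications *)
     (forall (A : Type) (P : A -> Prop) (le : A -> A -> Prop), is_dcpo P le ->
        forall UU, Tcar (Tcar P le) Tle UU ->
          phi A P le (muT P le UU) =
          muH P le (Hmap (Hcar P le) incl (phi A P le)
                      (phi (A -> Prop) (Tcar P le) Tle UU))) /\
     (* Kleisli maps X -> H(Y) correspond to V |-> {x | V meets g(x)} *)
     (forall (A : Type) (PA : A -> Prop) (leA : A -> A -> Prop)
             (B : Type) (PB : B -> Prop) (leB : B -> B -> Prop)
             (g : A -> (B -> Prop)) (k : A -> (B -> Prop)),
        is_dcpo PA leA -> is_dcpo PB leB ->
        scott_cont PA leA (Hcar PB leB) incl g ->
        (forall x, PA x -> Tcar PB leB (k x) /\ phi B PB leB (k x) = g x) ->
        forall V, scott_open PB leB V ->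
          forall x,
            ((PA x /\ ~ incl V (k x)) <-> (PA x /\ exists y, V y /\ g x y)))).
Proof.
 split.
 - intros L A P le Hd; split; [|split; [|split]].
   + exact (fbar_cont_to_Lop L A P le).
   + exact (gbar_join_top_pres L A P le Hd).
   + exact (gbar_fbar L A P le).
   + intros g _; exact (fbar_gbar L A P g).
 - exists (fun A P _ => compl P); split; [|split; [|split; [|split]]].
   + intros A P le _; split; [|split].
     * exact (Hcar_compl A P le).
     * intros C HC; exists (compl P C); split; [apply Tcar_compl, HC |].
       exact (compl_involutive A P C (proj1 (proj1 HC))).
     * intros U V _ [[HVP _] _]; exact (Tle_compl A P U V HVP).
   + intros A PA leA B PB leB h _ _ Hh U _; exact (compl_Tmap PA PB leB h U (proj1 Hh)).
   + intros A P le Hd x Px; exact (compl_etaT P le x Hd Px).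
   + intros A P le _ UU _; exact (compl_muT P le UU).
   + intros A PA leA B PB leB g k _ _ _ Hk V HV x.
     assert (Hmeets : PA x -> ~ incl V (k x) <-> exists y, V y /\ g x y).
     { intro Px; rewrite <- (proj2 (Hk x Px)); exact (not_incl_compl PB _ V (proj1 HV)). }
     split; intros [Px H]; (split; [exact Px | apply (Hmeets Px), H]).
Qed.
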